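(* Let $I$ be a dyadic interval with left half $I_l$ and right half $I_r$, and let $\Psi(x_1,\ldots,x_m)$ be a bounded measurable function. Then $$\sum_{\substack{S\subseteq\{1,\ldots,m\}\\|S|\ \text{even}}}\Big[\big\langle\Psi(x_1,\ldots,x_m)\big\rangle_{x_i\in I\ (i\in S)}\Big]_{x_i\in I\ (i\notin S)}=\frac12\big[\Psi(x_1,\ldots,x_m)\big]_{x_1,\ldots,x_m\in I_l}+\frac12\big[\Psi(x_1,\ldots,x_m)\big]_{x_1,\ldots,x_m\in I_r}.$$ In particular, if $\Psi\geq 0$, then the left-hand sum is nonnegative.
   Context: For a dyadic interval $I$ and integrable $f$, $[f(x)]_{x\in I}:=\frac{1}{|I|}\int_I f$ and $\langle f(x)\rangle_{x\in I}:=\frac{1}{|I|}\big(\int_{I_l}f-\int_{I_r}f\big)$; brackets with several subscripted variables denote iterated averages in each variable (for $[\cdot]_{x\in I_l}$ the average is over $I_l$). The sum includes $S=\emptyset$. *)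

From HB Require Import structures.
From mathcomp Require Import all_boot all_order all_algebra.
From mathcomp Require Import all_classical all_reals all_analysis.
Set Implicit Arguments. Unset Strict Implicit. Unset Printing Implicit Defensive.
Import Order.TTheory GRing.Theory Num.Theory.
Local Open Scope classical_set_scope.
Local Open Scope ring_scope.

Section Defs.
Variable R : realType.

Definition dlen (j : int) : R := (2 : R) ^ j.
Definition dleft (j k : int) : R := k%:~R * dlen j.
Definition dmid (j k : int) : R := dleft j k + dlen j / 2.
Definition dright (j k : int) : R := dleft j k + dlen j.

Definition Rint (a b : R) (f : R -> R) : R :=
  Rintegral (@lebesgue_measure R) `[a, b[ f.

Definition avg (a b : R) (f : R -> R) : R := (b - a)^-1 * Rint a b f.

Definition haar_avg (a b : R) (f : R -> R) : R :=
  (b - a)^-1 * (Rint a ((a + b) / 2) f - Rint ((a + b) / 2) b f).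

Definition upd (m : nat) (x : 'I_m -> R) (i : 'I_m) (t : R) : 'I_m -> R :=
  fun j => if j == i then t else x j.

(* Iterated one-variable operation [op] applied successively in the
   variables x_i, i in s (the first index of s is the outermost). The
   remaining variables are those of the point x. *)
Fixpoint iter_op (m : nat) (op : (R -> R) -> R) (s : seq 'I_m)
    (F : ('I_m -> R) -> R) (x : 'I_m -> R) : R :=
  match s with
  | [::] => F x
  | i :: s' => op (fun t => iter_op op s' F (upd x i t))
  end.

Definition mixed_avg (m : nat) (j k : int) (S : {set 'I_m})
    (Psi : ('I_m -> R) -> R) : R :=
  iter_op (avg (dleft j k) (dright j k)) (enum (~: S))
    (fun y => iter_op (haar_avg (dleft j k) (dright j k)) (enum S) Psi y)
    (fun _ => 0).

Definition full_avg (m : nat) (a b : R) (Psi : ('I_m -> R) -> R) : R :=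
  iter_op (avg a b) (enum 'I_m) Psi (fun _ => 0).

(* Measurability of Psi : R^m -> R w.r.t. the product Borel sigma-algebra
   on R^m (generated by the cylinders {x | x i in A}, A Borel) *)
Definition cylinders (m : nat) : set (set ('I_m -> R)) :=
  [set C | exists i : 'I_m, exists A : set R,
       measurable A /\ C = [set x | A (x i)]].

Definition measurable_Rn (m : nat) (Psi : ('I_m -> R) -> R) : Prop :=
  forall B : set R, measurable B ->
    smallest (sigma_algebra setT) (@cylinders m) (Psi @^-1` B).

Definition bounded_Rn (m : nat) (Psi : ('I_m -> R) -> R) : Prop :=
  exists M : R, forall x, `|Psi x| <= M.

End Defs.
Arguments dlen {R}. Arguments dleft {R}. Arguments dmid {R}. Arguments dright {R}.

(* Let A and H be the one-variable functionals f |-> [f]_I and f |-> <f>_I.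
   Both are finite linear combinations of integrals over intervals, so by
   Fubini two of them acting on different variables commute: the S-term is
   the composition, over all variables i, of H if i is in S and of A
   otherwise, taken in any order.  Composing A + c H over all variables thus
   gives the sum over S of c^|S| times the S-term, and averaging the cases
   c = 1 and c = -1 keeps exactly the sets of even size.  Finally A + H and
   A - H are the averages over I_l and I_r. *)

From Pilot Require Import Defs.
From HB Require Import structures.
From mathcomp Require Import all_boot all_order all_algebra.
From mathcomp Require Import all_classical all_reals all_analysis.
From mathcomp Require Import measurable_realfun ring lra.
Import Order.TTheory GRing.Theory Num.Theory.
Local Open Scope classical_set_scope.
Local Open Scope ring_scope.
Set Implicit Arguments. Unset Strict Implicit. Unset Printing Implicit Defensive.

(* A bare [Rint] would denote the integer predicate of ssrnum. *)
Local Notation Rint := Defs.Rint.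

Section ItvIntegral.
Context {R : realType}.
Local Notation mu := (@lebesgue_measure R).

Definition itv_integrable (f : R -> R) :=
  forall a b : R, mu.-integrable `[a, b[ (EFin \o f).

Lemma lebesgue_measure_itv_lty (a b : R) : (mu `[a, b[ < +oo)%E.
Proof. by rewrite lebesgue_measure_itv/=; case: ifPn => _ //; rewrite -EFinB ltry. Qed.

Lemma bounded_itv_integrable (f : R -> R) (M : R) :
  measurable_fun setT f -> (forall t, `|f t| <= M) -> itv_integrable f.
Proof.
move=> mf fM a b; apply: measurable_bounded_integrable.
- exact: measurable_itv.
- exact: lebesgue_measure_itv_lty.
- exact: measurable_funS mf.
- rewrite /bounded_near; near=> y => x _ /=; apply: le_trans (fM x) _.
  by near: y; exact: nbhs_pinfty_ge (num_real M).
Unshelve. all: by end_near.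
Qed.

Lemma itv_integrable_cst (c : R) : itv_integrable (fun=> c).
Proof. exact: (@bounded_itv_integrable _ `|c|). Qed.

Lemma itv_integrable_sumZ (I : Type) (r : seq I) (P : pred I) (c : I -> R)
    (g : I -> R -> R) :
  (forall k, P k -> itv_integrable (g k)) ->
  itv_integrable (fun t => \sum_(k <- r | P k) c k * g k t).
Proof.
move=> ig a b.
have -> : EFin \o (fun t => \sum_(k <- r | P k) c k * g k t) =
    (fun t => \sum_(k <- r | P k) (c k)%:E * (g k t)%:E)%E.
  by apply/funext => t /=; rewrite -sumEFin; apply: eq_bigr => k _; rewrite EFinM.
apply: integrable_sum => [|k Pk]; first exact: measurable_itv.
by apply: integrableZl; [exact: measurable_itv | exact: ig].
Qed.

Lemma Rint_sumZ (I : Type) (r : seq I) (P : pred I) (c : I -> R)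
    (g : I -> R -> R) a b :
  (forall k, P k -> itv_integrable (g k)) ->
  Rint a b (fun t => \sum_(k <- r | P k) c k * g k t) =
  \sum_(k <- r | P k) c k * Rint a b (g k).
Proof.
move=> ig; elim: r => [|k r IH].
  rewrite big_nil /Rint (@eq_Rintegral _ _ _ _ _ (fun=> 0)) => [|t _]; last first.
    by rewrite big_nil.
  by rewrite Rintegral_cst ?mul0r //; exact: measurable_itv.
rewrite big_cons; case: ifPn => Pk; last first.
  by rewrite -IH; apply: eq_Rintegral => t _; rewrite big_cons (negbTE Pk).
have intk := ig k Pk a b.
rewrite -IH /Rint -RintegralZl // -RintegralD.
- by apply: eq_Rintegral => t _; rewrite big_cons Pk.
- exact: measurable_itv.
- exact: integrableZl intk.
- exact: itv_integrable_sumZ.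
Qed.

Lemma RintE (f : R -> R) a b :
  Rint a b f = fine (\int[mu]_t (((EFin \o f) \_ `[a, b[) t))%E.
Proof. by rewrite /Rint /Rintegral integral_mkcond. Qed.

Lemma EFin_Rint (f : R -> R) a b : itv_integrable f ->
  ((Rint a b f)%:E = \int[mu]_t (((EFin \o f) \_ `[a, b[) t))%E.
Proof.
move=> intf; rewrite RintE fineK // -integral_mkcond.
by apply: integrable_fin_num => //; exact: intf.
Qed.

Lemma norm_Rint_le (f : R -> R) (M : R) a b : measurable_fun setT f ->
  (forall t, `|f t| <= M) -> `|Rint a b f| <= M * fine (mu `[a, b[).
Proof.
move=> mf fM; have intf := bounded_itv_integrable mf fM.
rewrite /Rint -Rintegral_cst; last exact: measurable_itv.
apply: le_trans; first exact: le_normr_Rintegral.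
apply: le_Rintegral => //.
- exact: integrable_norm.
- exact: itv_integrable_cst.
Qed.

Lemma Rint_itv_split (a c b : R) f : a <= c -> c <= b -> itv_integrable f ->
  Rint a b f = Rint a c f + Rint c b f.
Proof.
move=> ac cb intf.
have abE : [set` `[a, b[] = [set` `[a, c[] `|` [set` `[c, b[] :> set R.
  by apply: itv_bndbnd_setU; rewrite bnd_simp.
have := intf a b; rewrite /Rint abE => intf'; rewrite Rintegral_setU //.
apply/disj_setPS => x [/=]; rewrite !in_itv /= => /andP[_ xc] /andP[cx _].
by move: (lt_le_trans xc cx); rewrite ltxx.
Qed.

End ItvIntegral.

Section Fubini.
Context {R : realType}.
Local Notation mu := (@lebesgue_measure R).

Lemma integrable_rectangle (H : R * R -> R) (M : R) a b c d :
  measurable_fun setT H -> (forall p, `|H p| <= M) ->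
  (mu \x mu)%E.-integrable setT
    ((EFin \o H) \_ ([set` `[a, b[] `*` [set` `[c, d[]))%E.
Proof.
move=> mH HM; have M0 : 0 <= M by apply: le_trans (HM (0, 0)).
have mD : measurable ([set` `[a, b[] `*` [set` `[c, d[] : set (R * R)).
  by apply: measurableX; exact: measurable_itv.
rewrite -integrable_mkcond //; apply/integrableP; split.
  by apply/measurable_EFinP; exact: measurable_funS mH.
apply: (le_lt_trans (integral_le_bound M%:E _ _ _ _)).
- exact: mD.
- by apply/measurable_EFinP; exact: measurable_funS mH.
- by rewrite lee_fin.
- by apply: aeW => p _ /=; rewrite lee_fin HM.
set X := (X in (_ * X < _)%E).
have -> : X = (mu [set` `[a, b[] * mu [set` `[c, d[])%E.
  by apply: product_measure1E; exact: measurable_itv.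
rewrite !lebesgue_measure_itv/=.
by case: ifPn => _; case: ifPn => _; rewrite -?EFinB -?EFinM ?ltry ?mule0 ?mul0e ?ltry.
Qed.

Lemma Rint_fubini (H : R * R -> R) (M : R) a b c d :
  measurable_fun setT H -> (forall p, `|H p| <= M) ->
  Rint a b (fun s => Rint c d (fun t => H (s, t))) =
  Rint c d (fun t => Rint a b (fun s => H (s, t))).
Proof.
move=> mH HM.
have ints s : itv_integrable (fun t => H (s, t)).
  exact: bounded_itv_integrable (measurableT_comp mH (pair1_measurable s))
    (fun t => HM (s, t)).
have intt t : itv_integrable (fun s => H (s, t)).
  exact: bounded_itv_integrable (measurableT_comp mH (pair2_measurable t))
    (fun s => HM (s, t)).
pose D := [set` `[a, b[] : set R; pose E := [set` `[c, d[] : set R.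
pose K := ((EFin \o H) \_ (D `*` E))%E.
have sectionK1 s : (((EFin \o (fun s => Rint c d (fun t => H (s, t)))) \_ D) s
    = \int[mu]_t K (s, t))%E.
  rewrite /K /patch /=; case: ifPn => sD.
    by rewrite EFin_Rint //; apply: eq_integral => t _; rewrite /patch in_setX sD.
  rewrite [LHS](_ : _ = 0%E) // -(integral0 mu setT).
  by apply: eq_integral => t _; rewrite in_setX (negbTE sD).
have sectionK2 t : (((EFin \o (fun t => Rint a b (fun s => H (s, t)))) \_ E) t
    = \int[mu]_s K (s, t))%E.
  rewrite /K /patch /=; case: ifPn => tE.
    by rewrite EFin_Rint //; apply: eq_integral => s _; rewrite /patch in_setX tE andbT.
  rewrite [LHS](_ : _ = 0%E) // -(integral0 mu setT).
  by apply: eq_integral => s _; rewrite in_setX (negbTE tE) andbF.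
rewrite [LHS]RintE [RHS]RintE; congr fine.
under eq_integral do rewrite sectionK1.
under [RHS]eq_integral do rewrite sectionK2.
exact: Fubini (integrable_rectangle a b c d mH HM).
Qed.

End Fubini.

Section ParamIntegral.
Context {R : realType}.
Local Notation mu := (@lebesgue_measure R).

(* [Rint] is [fine] of the Tonelli section integral, also where the latter is
   [+oo]; hence no integrability is needed. *)
Lemma measurable_param_Rint_ge0 d (T : measurableType d) (H : T * R -> R) a b :
  measurable_fun setT H -> (forall p, 0 <= H p) ->
  measurable_fun setT (fun y => Rint a b (fun t => H (y, t))).
Proof.
move=> mH H0; pose K p := (H p * \1_[set` `[a, b[] p.2)%:E.
have mK : measurable_fun setT K.
  apply/measurable_EFinP; apply: measurable_funM => //.
  apply: measurableT_comp measurable_snd.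
  by apply: measurable_indic; exact: measurable_itv.
have K0 p : (0 <= K p)%E by rewrite lee_fin mulr_ge0 // indicE.
rewrite (_ : (fun y => _) = fine \o fubini_F mu K); last first.
  apply/funext => y; rewrite /= RintE /fubini_F; congr fine.
  apply: eq_integral => t _; rewrite /K /patch indicE /=.
  by case: ifPn => _; rewrite ?mulr1 ?mulr0.
exact: measurableT_comp (measurable_fun_fubini_tonelli_F (m2 := mu) K mK K0).
Qed.

Lemma measurable_param_Rint d (T : measurableType d) (H : T * R -> R) (M : R) a b :
  measurable_fun setT H -> (forall p, `|H p| <= M) ->
  measurable_fun setT (fun y => Rint a b (fun t => H (y, t))).
Proof.
move=> mH HM.
have HM0 p : 0 <= H p + M.
  by move: (HM p); rewrite ler_norml => /andP[? _]; lra.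
have mHM : measurable_fun setT (fun y => Rint a b (fun t => H (y, t) + M)).
  apply: (measurable_param_Rint_ge0 (H := fun p => H p + M)) => //.
  exact: measurable_funD.
rewrite (_ : (fun y => _) =
    (fun y => Rint a b (fun t => H (y, t) + M) - Rint a b (fun=> M))).
  by apply: measurable_funB => //; exact: measurable_cst.
apply/funext => y; rewrite /Rint RintegralD ?addrK //.
- exact: bounded_itv_integrable (measurableT_comp mH (pair1_measurable y))
    (fun t => HM (y, t)) a b.
- exact: itv_integrable_cst.
Qed.

Lemma itv_integrable_param_Rint (H : R * R -> R) (M : R) a b :
  measurable_fun setT H -> (forall p, `|H p| <= M) ->
  itv_integrable (fun s => Rint a b (fun t => H (s, t))).
Proof.
move=> mH HM; apply: (bounded_itv_integrable (M := M * fine (mu `[a, b[))).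
  exact: measurable_param_Rint mH HM.
move=> s; apply: norm_Rint_le => [|t]; last exact: HM.
exact: measurableT_comp mH (pair1_measurable s).
Qed.

End ParamIntegral.

Section Admissible.
Context {R : realType} (m : nat).
Local Notation V := ('I_m -> R).

Definition coord_measurable d (T : measurableType d) (phi : T -> V) :=
  forall i, measurable_fun setT (fun y => phi y i).

(* A substitute for measurability w.r.t. the product sigma-algebra on R^m
   that is stable under integrating out one variable. *)
Definition admissible (G : V -> R) :=
  bounded_Rn G /\
  forall d (T : measurableType d) (phi : T -> V), coord_measurable phi ->
    measurable_fun setT (G \o phi).

Lemma coord_measurable_cst d (T : measurableType d) (x : V) :
  coord_measurable (fun _ : T => x).
Proof. by move=> i; exact: measurable_cst. Qed.

Lemma coord_measurable_upd d (T : measurableType d) (phi : T -> V) (g : T -> R) i :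
  coord_measurable phi -> measurable_fun setT g ->
  coord_measurable (fun y => upd (phi y) i (g y)).
Proof. by move=> mphi mg j; rewrite /upd; case: (j == i). Qed.

Lemma coord_measurable_fst d d' (T : measurableType d) (T' : measurableType d')
    (phi : T -> V) :
  coord_measurable phi -> coord_measurable (fun p : T * T' => phi p.1).
Proof. by move=> mphi j; exact: measurableT_comp (mphi j) measurable_fst. Qed.

Lemma measurable_Rn_admissible (G : V -> R) :
  measurable_Rn G -> bounded_Rn G -> admissible G.
Proof.
move=> mG bG; split => // d T phi mphi _ B mB; rewrite setTI.
apply: (mG B mB [set A | measurable (phi @^-1` A)]); split; last first.
  by move=> _ [i [A [mA ->]]]; have := mphi i measurableT A mA; rewrite setTI.
split => [|A mA|F mF] /=.
- by rewrite preimage_set0; exact: measurable0.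
- by rewrite setTD -preimage_setC; exact: measurableC.
- by rewrite preimage_bigcup; exact: bigcupT_measurable.
Qed.

Lemma admissible_sumZ (I : Type) (l : seq I) (c : I -> R) (G : I -> V -> R) :
  (forall k, admissible (G k)) ->
  admissible (fun x => \sum_(k <- l) c k * G k x).
Proof.
move=> aG; split => [|d T phi mphi].
  elim: l => [|k l [M GM]]; first by exists 0 => x; rewrite big_nil normr0.
  have [Mk GkM] := (aG k).1; exists (`|c k| * Mk + M) => x; rewrite big_cons.
  by rewrite (le_trans (ler_normD _ _)) // lerD // normrM ler_wpM2l.
rewrite /comp; apply: measurable_sum => k; apply: measurable_funM.
  exact: measurable_cst.
exact: (aG k).2.
Qed.

Lemma admissible_measurable_section (G : V -> R) (x : V) i : admissible G ->
  measurable_fun setT (fun t => G (upd x i t)).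
Proof.
move=> [_ mG]; apply: (mG _ _ (fun t : R => upd x i t)).
by apply: coord_measurable_upd; [exact: coord_measurable_cst | exact: measurable_id].
Qed.

Lemma admissible_itv_integrable (G : V -> R) (x : V) i : admissible G ->
  itv_integrable (fun t => G (upd x i t)).
Proof.
move=> aG; have [M GM] := aG.1.
exact: bounded_itv_integrable (admissible_measurable_section x i aG) (fun t => GM _).
Qed.

Lemma admissible_Rint (G : V -> R) a b i : admissible G ->
  admissible (fun x => Rint a b (fun t => G (upd x i t))).
Proof.
move=> aG; have [[M GM] mG] := aG; split.
  exists (M * fine (lebesgue_measure `[a, b[)) => x.
  by apply: norm_Rint_le => //; exact: admissible_measurable_section.
move=> d T phi mphi; rewrite /comp.
apply: (@measurable_param_Rint _ _ _ (fun p : T * R => G (upd (phi p.1) i p.2)) M).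
  apply: (mG _ _ (fun p : T * R => upd (phi p.1) i p.2)).
  by apply: coord_measurable_upd; [exact: coord_measurable_fst | exact: measurable_snd].
by move=> p; exact: GM.
Qed.

End Admissible.

Section ItvForm.
Context {R : realType}.

Definition itv_form (op : (R -> R) -> R) := exists l : seq (R * R * R),
  forall f, op f = \sum_(p <- l) p.1.1 * Rint p.1.2 p.2 f.

Lemma itv_form_sumZ op (I : Type) (r : seq I) (P : pred I) (c : I -> R)
    (g : I -> R -> R) :
  itv_form op -> (forall k, P k -> itv_integrable (g k)) ->
  op (fun t => \sum_(k <- r | P k) c k * g k t) = \sum_(k <- r | P k) c k * op (g k).
Proof.
move=> [l opE] ig; rewrite opE.
under eq_bigr => p _ do rewrite (Rint_sumZ r c p.1.2 p.2 ig) mulr_sumr.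
rewrite exchange_big /=; apply: eq_bigr => k Pk.
by rewrite opE mulr_sumr; apply: eq_bigr => p _; rewrite mulrCA.
Qed.

Lemma itv_form_Rint op (H : R * R -> R) (M : R) a b :
  itv_form op -> measurable_fun setT H -> (forall p, `|H p| <= M) ->
  op (fun t => Rint a b (fun s => H (s, t))) = Rint a b (fun s => op (fun t => H (s, t))).
Proof.
move=> [l opE] mH HM; rewrite opE.
rewrite (_ : (fun s => op _) =
    fun s => \sum_(p <- l) p.1.1 * Rint p.1.2 p.2 (fun t => H (s, t))); last first.
  by apply/funext => s; rewrite opE.
rewrite Rint_sumZ => [|p _]; last exact: itv_integrable_param_Rint mH HM.
by apply: eq_bigr => p _; rewrite (Rint_fubini _ _ _ _ mH HM).
Qed.

Lemma itv_formC o1 o2 (H : R * R -> R) (M : R) :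
  itv_form o1 -> itv_form o2 -> measurable_fun setT H -> (forall p, `|H p| <= M) ->
  o1 (fun t => o2 (fun s => H (s, t))) = o2 (fun s => o1 (fun t => H (s, t))).
Proof.
move=> fo1 [l o2E] mH HM.
pose H' p := H (p.2, p.1).
have mH' : measurable_fun setT H'.
  exact: measurableT_comp mH (measurable_fun_pair measurable_snd measurable_fst).
under eq_fun do rewrite o2E.
rewrite itv_form_sumZ // => [|p _].
  by rewrite o2E; apply: eq_bigr => p _; rewrite (itv_form_Rint _ _ fo1 mH HM).
exact: itv_integrable_param_Rint mH' (fun p => HM _).
Qed.

Lemma itv_formDZ A B (c : R) : itv_form A -> itv_form B ->
  itv_form (fun f => A f + c * B f).
Proof.
move=> [lA AE] [lB BE]; exists (lA ++ map (fun p => (c * p.1.1, p.1.2, p.2)) lB) => f.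
rewrite big_cat big_map AE BE mulr_sumr; congr (_ + _).
by apply: eq_bigr => p _; rewrite mulrA.
Qed.

End ItvForm.

Section IterOps.
Context {R : realType} (m : nat).
Local Notation V := ('I_m -> R).

Fixpoint iter_ops (o : 'I_m -> (R -> R) -> R) (s : seq 'I_m) (F : V -> R)
    (x : V) : R :=
  match s with
  | [::] => F x
  | i :: s' => o i (fun t => iter_ops o s' F (upd x i t))
  end.

Lemma iter_opE (op : (R -> R) -> R) s F x :
  iter_op op s F x = iter_ops (fun=> op) s F x.
Proof. by elim: s x => [|i s IH] x //=; congr op; apply/funext => t. Qed.

Lemma iter_ops_cat o s1 s2 F x :
  iter_ops o (s1 ++ s2) F x = iter_ops o s1 (iter_ops o s2 F) x.
Proof. by elim: s1 x => [|i s IH] x //=; congr (o i); apply/funext => t. Qed.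

Lemma eq_in_iter_ops o1 o2 s F x : {in s, o1 =1 o2} ->
  iter_ops o1 s F x = iter_ops o2 s F x.
Proof.
elim: s x => [|i s IH] x o12 //=; rewrite o12 ?mem_head //.
by congr (o2 i); apply/funext => t; apply: IH => k ks; rewrite o12 // in_cons ks orbT.
Qed.

Lemma admissible_itv_form op (G : V -> R) i : itv_form op -> admissible G ->
  admissible (fun x => op (fun t => G (upd x i t))).
Proof.
move=> [l opE] aG.
rewrite (_ : (fun x => _) =
    fun x => \sum_(p <- l) p.1.1 * Rint p.1.2 p.2 (fun t => G (upd x i t))).
  by apply: admissible_sumZ => p; exact: admissible_Rint.
by apply/funext => x; rewrite opE.
Qed.

Lemma admissible_iter_ops o s F : (forall i, itv_form (o i)) -> admissible F ->
  admissible (iter_ops o s F).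
Proof.
move=> fo aF; elim: s => [|i s IH] //=.
exact: admissible_itv_form (fo i) IH.
Qed.

Lemma eq_iter_ops_integrable o1 o2 s F x :
  (forall i, itv_form (o1 i)) -> admissible F ->
  (forall i, i \in s -> forall f, itv_integrable f -> o1 i f = o2 i f) ->
  iter_ops o1 s F x = iter_ops o2 s F x.
Proof.
move=> fo aF; elim: s x => [|i s IH] x o12 //=.
rewrite o12 ?mem_head //; last first.
  exact: admissible_itv_integrable (admissible_iter_ops s fo aF).
congr (o2 i); apply/funext => t.
by apply: IH => k ks; apply: o12; rewrite in_cons ks orbT.
Qed.

Lemma updC (x : V) i j t u : i != j ->
  upd (upd x i t) j u = upd (upd x j u) i t.
Proof.
move=> ij; apply/funext => k; rewrite /upd.
by case: (eqVneq k j) => [->|//]; rewrite eq_sym (negbTE ij).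
Qed.

Lemma iter_ops_cat_cons o s1 i s2 F x :
  (forall k, itv_form (o k)) -> admissible F -> i \notin s1 ->
  iter_ops o (s1 ++ i :: s2) F x = iter_ops o (i :: s1 ++ s2) F x.
Proof.
move=> fo aF; elim: s1 x => [|j s1 IH] x //=; rewrite in_cons negb_or => /andP[ij is1].
have [[M GM] mG] := admissible_iter_ops (s1 ++ s2) fo aF.
under eq_fun do rewrite IH //=.
pose H p := iter_ops o (s1 ++ s2) F (upd (upd x j p.2) i p.1).
have mH : measurable_fun setT H.
  apply: (mG _ _ (fun p : R * R => upd (upd x j p.2) i p.1)).
  apply: coord_measurable_upd; last exact: measurable_fst.
  by apply: coord_measurable_upd; [exact: coord_measurable_cst | exact: measurable_snd].
rewrite (itv_formC (H := H) (fo j) (fo i) mH (fun p => GM _)).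
congr (o i); apply/funext => u; congr (o j); apply/funext => t.
by rewrite /H updC // eq_sym.
Qed.

Lemma perm_iter_ops o s t F x :
  (forall k, itv_form (o k)) -> admissible F -> uniq s -> perm_eq s t ->
  iter_ops o s F x = iter_ops o t F x.
Proof.
move=> fo aF; elim: s t x => [|i s IH] t x us st.
  by move: st; rewrite perm_sym => /perm_nilP ->.
have it : i \in t by rewrite -(perm_mem st) mem_head.
case/splitPr: it st => t1 t2 st.
have : uniq (t1 ++ i :: t2) by rewrite -(perm_uniq st).
rewrite cat_uniq /= => /and3P[_ /norP[it1 _] _].
rewrite iter_ops_cat_cons //=; congr (o i); apply/funext => u.
apply: IH; first by case/andP: us.
by rewrite -(perm_cons i); apply: perm_trans st _; rewrite -[i :: t2]cat1s perm_catCA.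
Qed.

End IterOps.

Lemma sum_subsets_setU1 (T : finType) (V : nmodType) (g : {set T} -> V)
    (B : {set T}) i :
  i \notin B ->
  \sum_(S : {set T} | S \subset i |: B) g S =
  \sum_(S : {set T} | S \subset B) g S + \sum_(S : {set T} | S \subset B) g (i |: S).
Proof.
move=> iB; rewrite (bigID (fun S : {set T} => i \in S)) /= addrC; congr (_ + _).
  apply: eq_bigl => S; apply/andP/idP => [[/fintype.subsetP SiB iS]|SB].
    apply/fintype.subsetP => x xS; have := SiB x xS; rewrite in_setU1 => /predU1P[xi|//].
    by move: iS; rewrite -xi xS.
  split; first exact: fintype.subset_trans SB (finset.subsetUr _ _).
  by apply: contra iB; exact: (fintype.subsetP SB).
rewrite (reindex_onto (fun S : {set T} => i |: S) (fun S => S :\ i)) /=; last first.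
  by move=> S /andP[_ iS]; exact: finset.setD1K.
apply: eq_bigl => S; rewrite setU11 andbT; apply/andP/idP => [[iSiB /eqP <-]|SB].
  by rewrite -(setU1K iB); exact: finset.setSD.
have iS : i \notin S by apply: contra iB; exact: (fintype.subsetP SB).
by rewrite finset.setUS // setU1K.
Qed.

Lemma sum_even_sets (T : finType) (R : numFieldType) (X : {set T} -> R) :
  \sum_(S : {set T} | ~~ odd #|S|) X S =
  2^-1 * \sum_(S : {set T}) X S + 2^-1 * \sum_(S : {set T}) (-1) ^+ #|S| * X S.
Proof.
rewrite !mulr_sumr -big_split big_mkcond /=; apply: eq_bigr => S _.
by rewrite -signr_odd; case: (odd #|S|); rewrite /= ?expr1 ?expr0; field.
Qed.

Section Expansion.
Context {R : realType} (m : nat).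

Definition sel_op (A B : (R -> R) -> R) (S : {set 'I_m}) (i : 'I_m) :=
  if i \in S then B else A.

Lemma itv_form_sel_op A B S i : itv_form A -> itv_form B -> itv_form (sel_op A B S i).
Proof. by rewrite /sel_op; case: (i \in S). Qed.

Lemma sum_subsets_iter_ops A B (c : R) s F x :
  itv_form A -> itv_form B -> admissible F -> uniq s ->
  \sum_(S : {set 'I_m} | S \subset [set:: s]) c ^+ #|S| * iter_ops (sel_op A B S) s F x =
  iter_ops (fun _ f => A f + c * B f) s F x.
Proof.
move=> fA fB aF; elim: s x => [|i s IH] x /=.
  move=> _; rewrite finset.set_nil (big_pred1 finset.set0) => [|S].
    by rewrite cards0 expr0 mul1r.
  by rewrite finset.subset0.
case/andP => iNs us; have iB : i \notin [set:: s] by rewrite inE.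
pose g S t := iter_ops (sel_op A B S) s F (upd x i t).
have ig S : itv_integrable (g S).
  apply: admissible_itv_integrable; apply: admissible_iter_ops aF => k.
  exact: itv_form_sel_op.
rewrite set_cons sum_subsets_setU1 //.
transitivity (\sum_(S : {set 'I_m} | S \subset [set:: s]) c ^+ #|S| * A (g S) +
    c * \sum_(S : {set 'I_m} | S \subset [set:: s]) c ^+ #|S| * B (g S)).
  congr (_ + _); first by apply: eq_bigr => S SB; rewrite /sel_op ifN //;
    apply: contra iB; exact: (fintype.subsetP SB).
  rewrite mulr_sumr; apply: eq_bigr => S SB.
  have iS : i \notin S by apply: contra iB; exact: (fintype.subsetP SB).
  rewrite cardsU1 iS exprS -mulrA /sel_op setU11; congr (_ * (_ * B _)).
  apply/funext => t; apply: eq_in_iter_ops => k ks.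
  by rewrite /sel_op in_setU1 (negbTE (memPn iNs k ks)).
rewrite -!itv_form_sumZ //; congr (A _ + c * B _); apply/funext => t; exact: IH.
Qed.

Lemma iter_op_enum_setC A B S G x : itv_form A -> itv_form B -> admissible G ->
  iter_op A (enum (~: S)) (iter_op B (enum S) G) x =
  iter_ops (sel_op A B S) (enum 'I_m) G x.
Proof.
move=> fA fB aG.
have uniqCS : uniq (enum (~: S) ++ enum S).
  rewrite cat_uniq !enum_uniq /= andbT; apply/hasPn => y.
  by rewrite !mem_enum inE => /negPn.
rewrite iter_opE (eq_in_iter_ops (o2 := sel_op A B S)); last first.
  by move=> i; rewrite mem_enum inE /sel_op => /negbTE ->.
rewrite (_ : iter_op B _ G = iter_ops (sel_op A B S) (enum S) G); last first.
  apply/funext => y; rewrite iter_opE; apply: eq_in_iter_ops => i.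
  by rewrite mem_enum /sel_op => ->.
rewrite -iter_ops_cat; apply: perm_iter_ops => //.
  by move=> i; exact: itv_form_sel_op.
apply: uniq_perm; [exact: uniqCS | exact: enum_uniq |].
by move=> y; rewrite mem_cat !mem_enum inE orNb.
Qed.

End Expansion.

Section Dyadic.
Context {R : realType}.

Lemma itv_form_avg (a b : R) : itv_form (avg a b).
Proof. by exists [:: ((b - a)^-1, a, b)] => f; rewrite big_seq1. Qed.

Lemma itv_form_haar_avg (a b : R) : itv_form (haar_avg a b).
Proof.
exists [:: ((b - a)^-1, a, (a + b) / 2); (- (b - a)^-1, (a + b) / 2, b)] => f.
by rewrite big_cons big_seq1 /haar_avg /= mulrBr mulNr.
Qed.

Lemma avg_add_haar_avg (a b : R) f : a < b -> itv_integrable f ->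
  avg a b f + haar_avg a b f = avg a ((a + b) / 2) f.
Proof.
move=> ab intf.
rewrite /avg /haar_avg (@Rint_itv_split _ a ((a + b) / 2)) //; try lra.
by field; rewrite gt_eqF //; lra.
Qed.

Lemma avg_sub_haar_avg (a b : R) f : a < b -> itv_integrable f ->
  avg a b f - haar_avg a b f = avg ((a + b) / 2) b f.
Proof.
move=> ab intf.
rewrite /avg /haar_avg (@Rint_itv_split _ a ((a + b) / 2)) //; try lra.
by field; rewrite gt_eqF //; lra.
Qed.

Lemma avg_ge0 (a b : R) f : a <= b -> (forall t, 0 <= f t) -> 0 <= avg a b f.
Proof.
move=> ab f0; apply: mulr_ge0; first by rewrite invr_ge0 subr_ge0.
by apply: Rintegral_ge0 => t _; exact: f0.
Qed.

Lemma iter_op_ge0 (m : nat) (op : (R -> R) -> R) s (F : ('I_m -> R) -> R) x :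
  (forall f, (forall t, 0 <= f t) -> 0 <= op f) -> (forall y, 0 <= F y) ->
  0 <= iter_op op s F x.
Proof. by move=> op0 F0; elim: s x => [|i s IH] x //=; apply: op0 => t. Qed.

Lemma dmidE (j k : int) : dmid j k = (dleft j k + dright j k) / 2 :> R.
Proof. by rewrite /dmid /dright; field. Qed.

Lemma dleft_lt_dright (j k : int) : dleft j k < dright j k :> R.
Proof. by rewrite /dright ltrDl /dlen exprz_gt0. Qed.

Lemma sum_even_mixed_avg (m : nat) (j k : int) (Psi : ('I_m -> R) -> R) :
  admissible Psi ->
  \sum_(S : {set 'I_m} | ~~ odd #|S|) mixed_avg j k S Psi
    = 2^-1 * full_avg (dleft j k) (dmid j k) Psi
      + 2^-1 * full_avg (dmid j k) (dright j k) Psi.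
Proof.
move=> aPsi; rewrite dmidE; have := dleft_lt_dright j k.
set a := dleft j k; set b := dright j k => ab.
pose A := avg a b; pose B := haar_avg a b.
have fA : itv_form A by exact: itv_form_avg.
have fB : itv_form B by exact: itv_form_haar_avg.
have expand (c : R) : \sum_(S : {set 'I_m}) c ^+ #|S| * mixed_avg j k S Psi =
    iter_ops (fun _ f => A f + c * B f) (enum 'I_m) Psi (fun=> 0).
  rewrite -sum_subsets_iter_ops ?enum_uniq //; apply: eq_big => [S|S _].
    by apply/esym/fintype.subsetP => y _; rewrite inE mem_enum.
  by rewrite /mixed_avg iter_op_enum_setC.
have expand1 : \sum_(S : {set 'I_m}) mixed_avg j k S Psi =
    iter_ops (fun _ f => A f + 1 * B f) (enum 'I_m) Psi (fun=> 0).
  by rewrite -expand; apply: eq_bigr => S _; rewrite expr1n mul1r.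
rewrite sum_even_sets expand1 expand /full_avg !iter_opE; congr (_ * _ + _ * _).
  apply: eq_iter_ops_integrable => [i|//|i _ f intf]; first exact: itv_formDZ.
  by rewrite mul1r avg_add_haar_avg.
apply: eq_iter_ops_integrable => [i|//|i _ f intf]; first exact: itv_formDZ.
by rewrite mulN1r avg_sub_haar_avg.
Qed.

Lemma full_avg_ge0 (m : nat) (a b : R) (Psi : ('I_m -> R) -> R) :
  a <= b -> (forall x, 0 <= Psi x) -> 0 <= full_avg a b Psi.
Proof. by move=> ab Psi0; apply: iter_op_ge0 => // f; exact: avg_ge0. Qed.

End Dyadic.

Unset Implicit Arguments.

Theorem lemma1 (R : realType) (m : nat) (j k : int)
    (Psi : ('I_m -> R) -> R)
    (Psi_meas : measurable_Rn Psi) (Psi_bdd : bounded_Rn Psi) :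
  \sum_(S : {set 'I_m} | ~~ odd #|S|) mixed_avg j k S Psi
    = 2^-1 * full_avg (dleft j k) (dmid j k) Psi
      + 2^-1 * full_avg (dmid j k) (dright j k) Psi
  /\ ((forall x, 0 <= Psi x) ->
      0 <= \sum_(S : {set 'I_m} | ~~ odd #|S|) mixed_avg j k S Psi).
Proof.
have sumE := sum_even_mixed_avg j k (measurable_Rn_admissible Psi_meas Psi_bdd).
split => // Psi0; rewrite sumE.
have := dleft_lt_dright (R := R) j k; rewrite dmidE => ab.
by apply: addr_ge0; apply: mulr_ge0; rewrite ?invr_ge0 ?ler0n //;
  apply: full_avg_ge0 => //; lra.
Qed.
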